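(* Let $\pi$ be a smooth, positive probability density on the torus $\mathbb{T}^d$ and $\gamma$ a smooth vector field on $\mathbb{T}^d$ with $\nabla\cdot(\pi\gamma)=0$. Let $\Phi_{\Delta t}:\mathbb{T}^d\to\mathbb{T}^d$ be a numerical flow for $\dot x=\gamma(x)$ with $\Phi_{\Delta t}(x)=x+\gamma(x)\Delta t+K_1(x,\Delta t)\Delta t^2$, where $K_1$ is bounded uniformly on $\mathbb{T}^d$ for $\Delta t$ small, and suppose there exist $\Delta t_0>0$ and $L>0$ with $|\Phi_{\Delta t}(z_1)-\Phi_{\Delta t}(z_2)|\le L|z_1-z_2|$ for all $z_1,z_2$ and all $\Delta t<\Delta t_0$. Let $(\xi_n)$ be i.i.d. $\mathcal{N}(0,I)$ and define, with the same noise and $\widetilde{Z}_0=\widetilde{Y}_0=x$, $$\widetilde{Z}_{n+1}=\Phi_{\Delta t}(\widetilde{Z}_n)+\nabla\log\pi(\Phi_{\Delta t}(\widetilde{Z}_n))\Delta t+\sqrt{2\Delta t}\,\xi_n,\qquad \widetilde{Y}_{n+1}=\widetilde{Y}_n+\nabla\log\pi(\widetilde{Y}_n)\Delta t+\gamma(\widetilde{Y}_n)\Delta t+\sqrt{2\Delta t}\,\xi_n.$$ Then for $t=n\Delta t$ there exists a constant $C(t)>0$ independent of $\Delta t$ such that $\mathbb{E}_x|\widetilde{Y}_n-\widetilde{Z}_n|\le C(t)\Delta t$ for $\Delta t$ sufficiently small.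
   Context: $\widetilde{Z}_n$ is the unadjusted (non-Metropolised) Lie–Trotter splitting scheme and $\widetilde{Y}_n$ is the Euler–Maruyama discretisation of $dY_t=(\nabla\log\pi(Y_t)+\gamma(Y_t))dt+\sqrt2\,dW_t$. $\mathbb{E}_x$ denotes expectation with both chains started at $x$. *)

From HB Require Import structures.
From mathcomp Require Import all_boot all_order all_algebra.
From mathcomp Require Import all_classical all_reals all_analysis.
Set Implicit Arguments. Unset Strict Implicit. Unset Printing Implicit Defensive.
Import Order.TTheory GRing.Theory Num.Theory.
Import numFieldNormedType.Exports.
Local Open Scope classical_set_scope.
Local Open Scope ring_scope.

Section Defs.
Context {R : realType} {d : nat}.
Notation V := 'rV[R]_d.

Definition ev (i : 'I_d) : V := \row_j (j == i)%:R.

Definition intvec (k : V) : Prop := forall i, exists z : int, k ord0 i = z%:~R.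

Definition eunorm (v : V) : R := Num.sqrt (\sum_i v ord0 i ^+ 2).

(* distance on the torus T^d = R^d / Z^d, between the classes of x and y *)
Definition tdist (x y : V) : R :=
  inf [set eunorm (x - y - k) | k in [set k | intvec k]].

(* Z^d-zperiodic scalar function (= function on T^d) *)
Definition zperiodic (f : V -> R) : Prop :=
  forall x k, intvec k -> f (x + k) = f x.

Fixpoint ipartial (f : V -> R) (l : seq 'I_d) : V -> R :=
  if l is i :: l' then (fun x => 'D_(ev i) (ipartial f l') x) else f.

Definition smooth (f : V -> R) : Prop :=
  forall l, continuous (ipartial f l) /\
            forall i x, derivable (ipartial f l) x (ev i).

Definition grad_log (f : V -> R) (x : V) : V :=
  \row_i 'D_(ev i) (fun y => ln (f y)) x.

Definition div_prod (f : V -> R) (g : V -> V) (x : V) : R :=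
  \sum_i 'D_(ev i) (fun y => f y * g y ord0 i) x.

Fixpoint cube_int (n : nat) (g : (nat -> R) -> R) : R :=
  match n with
  | 0 => g (fun _ => 0)
  | n'.+1 => Rintegral lebesgue_measure `[0, 1]
      (fun t => cube_int n' (fun c => g (fun j => if j == n' then t else c j)))
  end.

Definition torus_prob_density (p : V -> R) : Prop :=
  cube_int d (fun c => p (\row_i c (nat_of_ord i))) = 1.

(* the lifted numerical flow Phi_dt is a well-defined map of T^d *)
Definition torus_map (F : V -> V) : Prop :=
  forall x k, intvec k -> intvec (F (x + k) - F x).

(* Lie--Trotter scheme Z~ and Euler--Maruyama scheme Y~, driven by the same
   noise xi : nat -> T -> R^d, both started at x, computed on lifts in R^d *)
Fixpoint Zscheme {Om : Type} (Phi : R -> V -> V) (p : V -> R) (xi : nat -> Om -> V)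
    (dt : R) (x : V) (n : nat) (w : Om) : V :=
  match n with
  | 0 => x
  | n'.+1 => let z := Phi dt (Zscheme Phi p xi dt x n' w) in
             z + dt *: grad_log p z + Num.sqrt (2 * dt) *: xi n' w
  end.

Fixpoint Yscheme {Om : Type} (g : V -> V) (p : V -> R) (xi : nat -> Om -> V)
    (dt : R) (x : V) (n : nat) (w : Om) : V :=
  match n with
  | 0 => x
  | n'.+1 => let y := Yscheme g p xi dt x n' w in
             y + dt *: grad_log p y + dt *: g y + Num.sqrt (2 * dt) *: xi n' w
  end.

End Defs.

Definition mutually_independent {dT : measure_display} {T : measurableType dT}
    {R : realType} {I : Type} (P : probability T R) (X : I -> {RV P >-> R}) : Prop :=
  forall (k : nat) (idx : 'I_k -> I) (B : 'I_k -> set R),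
    injective idx -> (forall j, measurable (B j)) ->
    P (\bigcap_(j in [set: 'I_k]) (X (idx j) @^-1` B j)) =
    (\prod_(j < k) P (X (idx j) @^-1` B j))%E.

Definition std_normal {dT : measure_display} {T : measurableType dT}
    {R : realType} (P : probability T R) (X : {RV P >-> R}) : Prop :=
  forall B : set R, measurable B -> P (X @^-1` B) = normal_prob 0 1 B.
Arguments mutually_independent {dT T R I} P X.
Arguments std_normal {dT T R} P X.

From HB Require Import structures.
From mathcomp Require Import all_boot all_order all_algebra.
From mathcomp Require Import all_classical all_reals all_analysis.
From mathcomp Require Import lra ring.
Import Order.TTheory GRing.Theory Num.Theory.
Import numFieldNormedType.Exports.
Local Open Scope classical_set_scope.
Local Open Scope ring_scope.
Set Implicit Arguments. Unset Strict Implicit. Unset Printing Implicit Defensive.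

(* Both schemes are driven by the same noise, so it cancels in the difference
   and the estimate is pathwise.  Since Phi_dt(z) = z + dt gamma(z) + O(dt^2),
   one step of the two schemes differs by the drift terms only, and the
   Lipschitz bounds for gamma and grad log pi (finite by smoothness and
   periodicity) give, for the error e_m = |Y_m - Z_m| modulo Z^d,
     e_(m+1) <= (1 + (L_gamma + L_pi) dt) e_m + A dt^2,   e_0 = 0.
   Discrete Gronwall yields e_n <= n A dt^2 exp((L_gamma + L_pi) n dt), which is
   O(dt) for n dt = t; integrating the pathwise bound gives the claim. *)

Lemma finite_ub (R : realDomainType) (I : finType) (f : I -> R) :
  exists2 B, 0 <= B & forall i, f i <= B.
Proof.
exists (\big[Order.max/0]_i f i); first exact: bigmax_ge_id.
by move=> i; apply: le_bigmax.
Qed.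

Lemma distr_div_le (R : numFieldType) (a b p q A Bi La Lp e : R) :
  p != 0 -> q != 0 -> `|p^-1| <= Bi -> `|q^-1| <= Bi -> `|b| <= A ->
  `|a - b| <= La * e -> `|p - q| <= Lp * e ->
  `|a / p - b / q| <= (La * Bi + A * Lp * Bi ^+ 2) * e.
Proof.
move=> p_neq0 q_neq0 pB qB bA abL pqL.
have -> : a / p - b / q = (a - b) * p^-1 + b * ((q - p) * (p^-1 * q^-1)).
  by field; rewrite p_neq0 q_neq0.
have -> : (La * Bi + A * Lp * Bi ^+ 2) * e = La * e * Bi + A * (Lp * e * (Bi * Bi)).
  by ring.
apply: le_trans (ler_normD _ _) _; rewrite !normrM (distrC q).
apply: lerD; first exact: ler_pM.
apply: ler_pM; rewrite ?mulr_ge0 //; apply: ler_pM; rewrite ?mulr_ge0 //.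
exact: ler_pM.
Qed.

Section torus.
Context {R : realType} {d : nat}.
Notation V := 'rV[R]_d.

Lemma entry_le_norm (v : V) i : `|v ord0 i| <= `|v|.
Proof.
rewrite [`|v|]mx_normrE.
exact: (le_bigmax _ (fun ij : 'I_1 * 'I_d => `|v ij.1 ij.2|) (ord0, i)).
Qed.

Lemma norm_le_entries (v : V) c :
  0 <= c -> (forall i, `|v ord0 i| <= c) -> `|v| <= c.
Proof.
move=> c_ge0 vc; rewrite [`|v|]mx_normrE.
by apply: bigmax_le => // -[a i] _ /=; rewrite (ord1 a).
Qed.

Lemma eunorm_ge0 (v : V) : 0 <= eunorm v.
Proof. exact: sqrtr_ge0. Qed.

Lemma entry_le_eunorm (v : V) i : `|v ord0 i| <= eunorm v.
Proof.
rewrite /eunorm -sqrtr_sqr ler_sqrt; last by apply: sumr_ge0 => j _; exact: sqr_ge0.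
by rewrite (bigD1 i) //= lerDl; apply: sumr_ge0 => j _; exact: sqr_ge0.
Qed.

Lemma eunorm_le_norm (v : V) : eunorm v <= d%:R * `|v|.
Proof.
have dv_ge0 : 0 <= d%:R * `|v| by rewrite mulr_ge0.
rewrite /eunorm -(ger0_norm dv_ge0) -sqrtr_sqr ler_sqrt ?sqr_ge0 //.
apply: (@le_trans _ _ (\sum_(i < d) `|v| ^+ 2)).
  apply: ler_sum => i _; rewrite -real_normK ?num_real //.
  by rewrite lerXn2r ?nnegrE ?entry_le_norm.
rewrite sumr_const card_ord -[_ *+ d]mulr_natl exprMn.
apply: ler_wpM2r; first exact: sqr_ge0.
by rewrite -natrX ler_nat; case: d => // n; rewrite expnS leq_pmulr.
Qed.

Lemma norm_le_eunorm (v : V) : `|v| <= eunorm v.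
Proof. by apply: norm_le_entries; [exact: eunorm_ge0 | exact: entry_le_eunorm]. Qed.

Lemma intvec0 : intvec (0 : V).
Proof. by move=> i; exists 0; rewrite mxE. Qed.

Lemma intvecB (k j : V) : intvec k -> intvec j -> intvec (k - j).
Proof.
move=> hk hj i; have [a ha] := hk i; have [b hb] := hj i.
by exists (a - b); rewrite !mxE ha hb intrB.
Qed.

Lemma tdist_le_eunorm (x y k : V) : intvec k -> tdist x y <= eunorm (x - y - k).
Proof.
move=> hk; apply: ge_inf; last by exists k.
by exists 0 => _ [? _ <-]; exact: eunorm_ge0.
Qed.

Lemma tdist_ge0 (x y : V) : 0 <= tdist x y.
Proof.
apply: lb_le_inf; last by move=> _ [k _ <-]; exact: eunorm_ge0.
by exists (eunorm (x - y - 0)), 0 => //; exact: intvec0.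
Qed.

Lemma zperiodicB (f : V -> R) x k : zperiodic f -> intvec k -> f (x - k) = f x.
Proof. by move=> pf hk; rewrite -[in RHS](subrK k x) (pf _ _ hk). Qed.

Lemma zperiodic_D (f : V -> R) v : zperiodic f -> zperiodic ('D_v f).
Proof.
move=> pf x k hk; rewrite /derive /=.
suff -> : (fun h : R => h^-1 *: (f (h *: v + (x + k)) - f (x + k))) =
          (fun h : R => h^-1 *: (f (h *: v + x) - f x)) by [].
by apply: boolp.funext => h; rewrite addrA !(pf _ _ hk).
Qed.

Lemma zperiodic_ipartial (f : V -> R) l : zperiodic f -> zperiodic (ipartial f l).
Proof. by move=> pf; elim: l => [|i l IH] //=; exact: zperiodic_D. Qed.

(* Every point is congruent mod Z^d to a point of the compact cube [0,1]^d. *)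
Lemma continuous_zperiodic_bounded (f : V -> R) :
  continuous f -> zperiodic f -> exists B, forall x, `|f x| <= B.
Proof.
move=> cf pf.
pose K := [set v : V | forall i, `[(0:R), 1]%classic (v ord0 i)].
have K0 : K !=set0 by exists 0 => i /=; rewrite mxE in_itv /= lexx ler01.
have cK : compact K := rV_compact (fun i => @segment_compact R 0 1).
have cnf : {within K, continuous (fun x => `|f x|)}.
  by apply: continuous_subspaceT => x; apply: continuous_comp (cf x) _; exact: norm_continuous.
have [c _ fc] := compact_EVT_max K0 cK cnf.
exists `|f c| => x.
pose k : V := \row_i (Num.floor (x ord0 i))%:~R.
have hk : intvec k by move=> i; exists (Num.floor (x ord0 i)); rewrite mxE.
rewrite -(zperiodicB x pf hk); apply: fc; rewrite inE => i /=.
rewrite !mxE in_itv /= subr_ge0 floor_le /= lerBlDr addrC ltW //.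
by rewrite -intrD1 floorD1_gt.
Qed.

Let line_quotientE (f : V -> R) v x s :
  (fun h : R => h^-1 *: (f ((h%:A + s) *: v + x) - f (s *: v + x))) =
  (fun h : R => h^-1 *: (f (h *: v + (s *: v + x)) - f (s *: v + x))).
Proof.
by apply: boolp.funext => h; rewrite -[h%:A]/(h * 1) mulr1 scalerDl addrA.
Qed.

Lemma derive_lineE (f : V -> R) v x s :
  'D_1 (fun h : R => f (h *: v + x)) s = 'D_v f (s *: v + x).
Proof. by rewrite /derive /= line_quotientE. Qed.

Lemma derivable_lineE (f : V -> R) v x s :
  derivable (fun h : R => f (h *: v + x)) s 1 = derivable f (s *: v + x) v.
Proof. by rewrite /derivable /= line_quotientE. Qed.

Lemma is_derive_line (f : V -> R) v x s : derivable f (s *: v + x) v ->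
  is_derive s 1 (fun h : R => f (h *: v + x)) ('D_v f (s *: v + x)).
Proof. by rewrite -derivable_lineE -derive_lineE; exact: derivableP. Qed.

Lemma mvt_line (f : V -> R) v x s B : (forall y, derivable f y v) ->
  (forall y, `|'D_v f y| <= B) -> `|f (s *: v + x) - f x| <= B * `|s|.
Proof.
move=> df dfB; pose g h := f (h *: v + x).
have g0 : g 0 = f x by rewrite /g scale0r add0r.
have dg h : is_derive h (1:R) g ('D_v f (h *: v + x)) by exact: is_derive_line.
have cg : continuous g.
  move=> h; apply: differentiable_continuous; apply/derivable1_diffP.
  by have [] := dg h.
have mvt a b : a < b -> exists2 c, c \in `]a, b[ & g b - g a = 'D_v f (c *: v + x) * (b - a).
  by move=> ab; apply: MVT (fun h _ => dg h) (continuous_subspaceT cg).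
have B_ge0 : 0 <= B := le_trans (normr_ge0 _) (dfB x).
rewrite -/(g s) -g0; case: (ltrgtP s 0) => [s_lt0|s_gt0|->].
- rewrite distrC; have [c _ ->] := mvt _ _ s_lt0.
  by rewrite normrM sub0r normrN ler_wpM2r.
- have [c _ ->] := mvt _ _ s_gt0.
  by rewrite normrM subr0 ler_wpM2r.
- by rewrite subrr !normr0 mulr0.
Qed.

Lemma lipschitz_of_bounded_partials (f : V -> R) B :
  (forall j y, derivable f y (ev j)) -> (forall j y, `|'D_(ev j) f y| <= B) ->
  forall y z, `|f y - f z| <= d%:R * B * `|y - z|.
Proof.
move=> df dfB y z.
pose u m : V := \row_i (if (i < m)%N then y ord0 i else z ord0 i).
suff key m : (m <= d)%N -> `|f (u m) - f z| <= m%:R * B * `|y - z|.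
  have ud : u d = y by apply/rowP => i; rewrite !mxE ltn_ord.
  by rewrite -{1}ud; exact: key.
elim: m => [_|m IH lt_md].
  have -> : u 0%N = z by apply/rowP => i; rewrite !mxE.
  by rewrite subrr normr0 !mul0r.
pose j : 'I_d := Ordinal lt_md.
have uS : u m.+1 = (y - z) ord0 j *: ev j + u m.
  apply/rowP => i; rewrite !mxE; have [->|neq_ij] := eqVneq i j.
    by rewrite /= ltnSn ltnn mulr1 subrK.
  rewrite mulr0 add0r ltnS leq_eqVlt.
  suff -> : (val i == m) = false by [].
  by apply: contraNF neq_ij => /eqP im; apply/eqP/val_inj.
have B_ge0 : 0 <= B := le_trans (normr_ge0 _) (dfB j y).
rewrite -(subrKA (f (u m))) -nat1r !mulrDl mul1r.
apply: le_trans (ler_normD _ _) _; apply: lerD; last exact: IH (ltnW lt_md).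
rewrite uS; apply: le_trans (mvt_line _ _ (df j) (dfB j)) _.
by rewrite ler_wpM2l // entry_le_norm.
Qed.

Definition torus_lipschitz {W : normedZmodType R} (L : R) (f : V -> W) :=
  forall y z k, intvec k -> `|f y - f z| <= L * `|y - z - k|.

Lemma zperiodic_torus_lipschitz (f : V -> R) L : zperiodic f ->
  (forall y z, `|f y - f z| <= L * `|y - z|) -> torus_lipschitz L f.
Proof. by move=> pf fL y z k hk; rewrite -(zperiodicB y pf hk) addrAC; apply: fL. Qed.

Lemma bounded_finite_family (I : finType) (F : I -> V -> R) :
  (forall i, exists B, forall x, `|F i x| <= B) ->
  exists2 B, 0 <= B & forall i x, `|F i x| <= B.
Proof.
move=> /boolp.choice[Bf FB]; have [B B_ge0 BfB] := finite_ub Bf.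
by exists B => // i x; apply: le_trans (FB i x) (BfB i).
Qed.

Lemma smooth_torus_lipschitz (f : V -> R) l : smooth f -> zperiodic f ->
  exists2 L, 0 <= L & torus_lipschitz L (ipartial f l).
Proof.
move=> sf pf; have pfl := zperiodic_ipartial l pf.
have [B B_ge0 dfB] := bounded_finite_family (F := fun j => 'D_(ev j) (ipartial f l))
  (fun j => continuous_zperiodic_bounded (sf (j :: l)).1 (zperiodic_D (ev j) pfl)).
exists (d%:R * B); first by rewrite mulr_ge0.
apply: zperiodic_torus_lipschitz => //.
by apply: lipschitz_of_bounded_partials dfB => j y; exact: (sf l).2.
Qed.

Lemma row_torus_lipschitz (F : V -> V) :
  (forall i, exists2 L, 0 <= L & torus_lipschitz L (fun x => F x ord0 i)) ->
  exists2 L, 0 <= L & torus_lipschitz L F.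
Proof.
move=> FL; have /boolp.choice[Lf FLf] :
    forall i, exists L, torus_lipschitz L (fun x => F x ord0 i).
  by move=> i; have [L _ ?] := FL i; exists L.
have [L L_ge0 LfL] := finite_ub Lf.
exists L => // y z k hk; apply: norm_le_entries => [|i]; first by rewrite mulr_ge0.
by rewrite !mxE; apply: le_trans (FLf i y z k hk) _; rewrite ler_wpM2r.
Qed.

Lemma row_bounded (F : V -> V) :
  (forall i, exists B, forall x, `|F x ord0 i| <= B) -> exists B, forall x, `|F x| <= B.
Proof.
move=> FB; have [B B_ge0 {}FB] := bounded_finite_family (F := fun i x => F x ord0 i) FB.
by exists B => x; apply: norm_le_entries.
Qed.

Lemma derive_ln (f : V -> R) x v : 0 < f x -> derivable f x v ->
  'D_v (fun y => ln (f y)) x = 'D_v f x / f x.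
Proof.
move=> /is_derive1_ln dln; rewrite -[x]add0r -(scale0r v).
rewrite -!derive_lineE -derivable_lineE => df; rewrite -!derive1E.
rewrite (derive1_comp df) ?scale0r ?add0r; last by have [] := dln.
by rewrite mulrC; congr (_ * _); rewrite derive1E derive_val.
Qed.

Lemma grad_log_torus_lipschitz (p : V -> R) :
  smooth p -> zperiodic p -> (forall x, 0 < p x) ->
  exists2 L, 0 <= L & torus_lipschitz L (grad_log p).
Proof.
move=> sp pp p_gt0; apply: row_torus_lipschitz => i.
have [La La_ge0 HLa] := smooth_torus_lipschitz [:: i] sp pp.
have [Lp Lp_ge0 HLp] := smooth_torus_lipschitz [::] sp pp.
have [A HA] := continuous_zperiodic_bounded (sp [:: i]).1 (zperiodic_ipartial [:: i] pp).
have [Bi HBi] : exists Bi, forall x, `|(p x)^-1| <= Bi.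
  apply: (@continuous_zperiodic_bounded (fun x => (p x)^-1)).
    by move=> x; apply: continuousV; [rewrite gt_eqF | exact: (sp [::]).1].
  by move=> x k hk /=; rewrite pp.
have A_ge0 := le_trans (normr_ge0 _) (HA 0).
have Bi_ge0 := le_trans (normr_ge0 _) (HBi 0).
exists (La * Bi + A * Lp * Bi ^+ 2); first by rewrite addr_ge0 ?mulr_ge0.
move=> y z k hk; rewrite !mxE !derive_ln ?p_gt0 //; try exact: (sp [::]).2.
apply: distr_div_le (HBi y) (HBi z) (HA z) (HLa y z k hk) (HLp y z k hk); by rewrite gt_eqF.
Qed.
End torus.

Lemma gronwall_step (R : realDomainType) (u b e : R) m : 1 <= u -> 0 <= b ->
  e <= m%:R * b * u ^+ m -> u * e + b <= m.+1%:R * b * u ^+ m.+1.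
Proof.
move=> u_ge1 b_ge0 e_le; have u_ge0 := le_trans ler01 u_ge1.
have ue : u * e <= m%:R * b * u ^+ m.+1.
  by rewrite exprS mulrCA ler_wpM2l.
have bu : b <= b * u ^+ m.+1 by rewrite ler_peMr // exprn_ege1.
by rewrite -nat1r mulrDl mul1r mulrDl addrC lerD.
Qed.

Lemma one_add_expn_le_expR (R : realType) (a : R) n :
  0 <= a -> (1 + a) ^+ n <= expR (n%:R * a).
Proof.
move=> a_ge0; rewrite expRM_natl lerXn2r ?nnegrE ?addr_ge0 ?expR_ge0 //.
exact: expR_ge1Dx.
Qed.

(* No measurability is needed: the integral of a nonnegative function is the
   supremum of the integrals of its simple minorants. *)
Lemma probability_integral_le_cst (dT : measure_display) (T : measurableType dT)
    (R : realType) (P : probability T R) (f : T -> R) c :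
  (forall w, 0 <= f w) -> (forall w, f w <= c) -> (\int[P]_w (f w)%:E <= c%:E)%E.
Proof.
move=> f_ge0 f_le; have c_ge0 := le_trans (f_ge0 point) (f_le point).
have -> : c%:E = (\int[P]_w (cst c%:E) w)%E.
  rewrite integral_cst // -[X in X = _]mule1; congr (_ * _)%E; exact: esym (probability_setT P).
rewrite !ge0_integralTE => [||w]; last by rewrite lee_fin.
- apply: ereal_sup_le => _ [h hf <-]; exists h => //= w.
  by apply: le_trans (hf w) _; rewrite lee_fin.
- by move=> w; rewrite lee_fin.
Qed.

Section scheme_error.
Context {R : realType} {d : nat} {Om : Type}.
Notation V := 'rV[R]_d.
Variables (p : V -> R) (gam : V -> V) (Phi : R -> V -> V) (xi : nat -> Om -> V).
Variables (K1 : V -> R -> V) (M Lg Lc G dt : R).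
Hypotheses (dt_gt0 : 0 < dt) (dt_le1 : dt <= 1).
Hypothesis Phi_expansion :
  forall z, intvec (Phi dt z - (z + dt *: gam z + dt ^+ 2 *: K1 z dt)).
Hypothesis K1_le : forall z, `|K1 z dt| <= M.
Hypotheses (Lg_ge0 : 0 <= Lg) (grad_log_lip : torus_lipschitz Lg (grad_log p)).
Hypotheses (Lc_ge0 : 0 <= Lc) (gam_lip : torus_lipschitz Lc gam).
Hypothesis gam_le : forall y, `|gam y| <= G.

Let dt_ge0 : 0 <= dt := ltW dt_gt0.
Let M_ge0 : 0 <= M := le_trans (normr_ge0 _) (K1_le 0).
Let G_ge0 : 0 <= G := le_trans (normr_ge0 _) (gam_le 0).
Let A_ge0 : 0 <= M + Lg * G + Lg * M := addr_ge0 (addr_ge0 M_ge0 (mulr_ge0 Lg_ge0 G_ge0))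
  (mulr_ge0 Lg_ge0 M_ge0).

Let normZ_dt (v : V) : `|dt *: v| = dt * `|v|.
Proof. by rewrite normrZ gtr0_norm. Qed.

Let normZ_dt2 (v : V) : `|dt ^+ 2 *: v| = dt ^+ 2 * `|v|.
Proof. by rewrite normrZ normrX gtr0_norm. Qed.

Lemma drift_step_error (y z k s : V) : intvec k ->
  exists2 k', intvec k' &
  `|y + dt *: grad_log p y + dt *: gam y + s
    - (Phi dt z + dt *: grad_log p (Phi dt z) + s) - k'|
  <= (1 + (Lc + Lg) * dt) * `|y - z - k| + (M + Lg * G + Lg * M) * dt ^+ 2.
Proof.
move=> hk; set zp := Phi dt z.
pose j := zp - (z + dt *: gam z + dt ^+ 2 *: K1 z dt).
have hj : intvec j := Phi_expansion z.
exists (k - j); first exact: intvecB.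
set e := `|y - z - k|.
have zp_err : `|y - zp - (k - j)| <= e + dt * G + dt ^+ 2 * M.
  have -> : y - zp - (k - j) = y - z - k - dt *: gam z - dt ^+ 2 *: K1 z dt.
    by apply/rowP => i; rewrite /j !mxE; ring.
  apply: le_trans (ler_normB _ _) _; rewrite normZ_dt2.
  apply: lerD; last by rewrite ler_wpM2l ?sqr_ge0.
  by apply: le_trans (ler_normB _ _) _; rewrite normZ_dt lerD2l ler_wpM2l ?gam_le.
have -> : y + dt *: grad_log p y + dt *: gam y + s
          - (zp + dt *: grad_log p zp + s) - (k - j) =
  y - z - k + dt *: (gam y - gam z) - dt ^+ 2 *: K1 z dt
  + dt *: (grad_log p y - grad_log p zp).
  by apply/rowP => i; rewrite /j !mxE; ring.
have gam_err : `|dt *: (gam y - gam z)| <= dt * (Lc * e).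
  by rewrite normZ_dt ler_wpM2l ?gam_lip.
have K1_err : `|dt ^+ 2 *: K1 z dt| <= dt ^+ 2 * M.
  by rewrite normZ_dt2 ler_wpM2l ?sqr_ge0.
have grad_err : `|dt *: (grad_log p y - grad_log p zp)| <= dt * (Lg * (e + dt * G + dt ^+ 2 * M)).
  rewrite normZ_dt ler_wpM2l //; apply: le_trans (grad_log_lip y zp (intvecB hk hj)) _.
  by rewrite ler_wpM2l.
have dt3 : dt * (Lg * (dt ^+ 2 * M)) <= dt ^+ 2 * (Lg * M).
  rewrite [leLHS](_ : _ = dt * (dt ^+ 2 * (Lg * M))); last by ring.
  by apply: ler_piMl; rewrite // !mulr_ge0 ?sqr_ge0.
have norm4 (a b c g : V) : `|a + b - c + g| <= `|a| + `|b| + `|c| + `|g|.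
  apply: le_trans (ler_normD _ _) _; rewrite lerD2r.
  by apply: le_trans (ler_normB _ _) _; rewrite lerD2r ler_normD.
apply: le_trans (norm4 _ _ _ _) _.
rewrite -/e; lra.
Qed.

Lemma scheme_error_le (x : V) (w : Om) n :
  exists2 k, intvec k &
  `|Yscheme gam p xi dt x n w - Zscheme Phi p xi dt x n w - k|
  <= n%:R * ((M + Lg * G + Lg * M) * dt ^+ 2) * (1 + (Lc + Lg) * dt) ^+ n.
Proof.
have u_ge1 : 1 <= 1 + (Lc + Lg) * dt by rewrite lerDl !mulr_ge0 ?addr_ge0.
have b_ge0 : 0 <= (M + Lg * G + Lg * M) * dt ^+ 2 by rewrite mulr_ge0 ?sqr_ge0.
elim: n => [|m [k hk IH]].
  by exists 0; [exact: intvec0 | rewrite /= !subrr normr0 !mul0r].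
have [k' hk' step] := drift_step_error (Yscheme gam p xi dt x m w)
  (Zscheme Phi p xi dt x m w) (Num.sqrt (2 * dt) *: xi m w) hk.
by exists k' => //; apply: le_trans step (gronwall_step u_ge1 b_ge0 IH).
Qed.

Lemma scheme_tdist_le (x : V) (w : Om) n t : n%:R * dt = t ->
  tdist (Yscheme gam p xi dt x n w) (Zscheme Phi p xi dt x n w)
  <= d%:R * (t * (M + Lg * G + Lg * M) * expR ((Lc + Lg) * t)) * dt.
Proof.
move=> ndt; have [k hk err] := scheme_error_le x w n.
have growth : (1 + (Lc + Lg) * dt) ^+ n <= expR ((Lc + Lg) * t).
  by rewrite -ndt mulrCA; apply: one_add_expn_le_expR; rewrite !mulr_ge0 ?addr_ge0.
apply: le_trans (tdist_le_eunorm _ _ hk) _; apply: le_trans (eunorm_le_norm _) _.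
rewrite -mulrA ler_wpM2l //; apply: le_trans err _.
rewrite [leRHS](_ : _ = n%:R * ((M + Lg * G + Lg * M) * dt ^+ 2) *
  expR ((Lc + Lg) * t)); last by rewrite -{1}ndt; ring.
by rewrite ler_wpM2l ?mulr_ge0 ?sqr_ge0.
Qed.
End scheme_error.

Unset Implicit Arguments.
Theorem lemmaC1 (R : realType) (d : nat)
    (p : 'rV[R]_d -> R) (gam : 'rV[R]_d -> 'rV[R]_d) (Phi : R -> 'rV[R]_d -> 'rV[R]_d)
    (dT : measure_display) (T : measurableType dT) (P : probability T R)
    (xi : nat -> 'I_d -> {RV P >-> R}) :
  (* pi: smooth positive probability density on T^d *)
  smooth p -> zperiodic p -> (forall x, 0 < p x) -> torus_prob_density p ->
  (* gamma: smooth vector field on T^d with div(pi gamma) = 0 *)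
  (forall i, smooth (fun x => gam x ord0 i)) ->
  (forall i, zperiodic (fun x => gam x ord0 i)) ->
  (forall x, div_prod p gam x = 0) ->
  (* Phi_dt : T^d -> T^d, Phi_dt(x) = x + gamma(x) dt + K1(x,dt) dt^2 with K1 bounded *)
  (forall dt, torus_map (Phi dt)) ->
  (exists K1 : 'rV[R]_d -> R -> 'rV[R]_d, exists dt1 : R, exists M : R,
     0 < dt1 /\
     (forall x dt, 0 < dt < dt1 ->
        intvec (Phi dt x - (x + dt *: gam x + dt ^+ 2 *: K1 x dt))) /\
     (forall x dt, 0 < dt < dt1 -> eunorm (K1 x dt) <= M)) ->
  (* uniform Lipschitz bound on T^d *)
  (exists dt0 L : R, 0 < dt0 /\ 0 < L /\
     forall dt, 0 < dt < dt0 -> forall z1 z2,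
       tdist (Phi dt z1) (Phi dt z2) <= L * tdist z1 z2) ->
  (* xi_n i.i.d. N(0, I_d): all coordinates independent standard normals *)
  mutually_independent P (fun ni : nat * 'I_d => xi ni.1 ni.2) ->
  (forall n i, std_normal P (xi n i)) ->
  forall t : R, 0 <= t ->
  exists C : R, 0 < C /\ exists delta : R, 0 < delta /\
    forall (x : 'rV[R]_d) (dt : R) (n : nat), 0 < dt < delta -> n%:R * dt = t ->
      let xiv := fun m w => \row_i (xi m i w) in
      (\int[P]_w (tdist (Yscheme gam p xiv dt x n w)
                        (Zscheme Phi p xiv dt x n w))%:E <= (C * dt)%:E)%E.
Proof.
move=> sp pp p_gt0 _ sg pg _ _ [K1 [dt1 [M [dt1_gt0 [Phi_exp K1_le]]]]] _ _ _ t t_ge0.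
have [Lg Lg_ge0 grad_lip] := grad_log_torus_lipschitz sp pp p_gt0.
have [Lc Lc_ge0 gam_lip] :=
  row_torus_lipschitz (fun i => smooth_torus_lipschitz [::] (sg i) (pg i)).
have [G gam_le] :=
  row_bounded (fun i => continuous_zperiodic_bounded (sg i [::]).1 (pg i)).
have G_ge0 : 0 <= G := le_trans (normr_ge0 _) (gam_le 0).
have M_ge0 : 0 <= M.
  by apply: le_trans (eunorm_ge0 _) (K1_le 0 (dt1 / 2) _); apply/andP; split; lra.
pose C := d%:R * (t * (M + Lg * G + Lg * M) * expR ((Lc + Lg) * t)).
have C_ge0 : 0 <= C by rewrite !mulr_ge0 ?expR_ge0 ?addr_ge0 ?mulr_ge0.
exists (C + 1); split; first lra.
exists (Order.min dt1 1); split; first by rewrite lt_min dt1_gt0 ltr01.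
move=> x dt n /andP[dt_gt0]; rewrite lt_min => /andP[dt_lt1 dt_le1] ndt /=.
have dtI : 0 < dt < dt1 by rewrite dt_gt0.
apply: probability_integral_le_cst => w; first exact: tdist_ge0.
apply: le_trans (scheme_tdist_le _ dt_gt0 (ltW dt_le1) (fun z => Phi_exp z dt dtI)
  (fun z => le_trans (norm_le_eunorm _) (K1_le z dt dtI))
  Lg_ge0 grad_lip Lc_ge0 gam_lip gam_le x w ndt) _.
by rewrite ler_wpM2r ?(ltW dt_gt0) // -/C lerDl.
Qed.
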